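(* Let $X$ and $Y$ be complete metric spaces, $k\ge2$, with nonexpansive $k$-means $\mu$ on $X$ and $\nu$ on $Y$ that are coordinatewise $\rho$-contractive and coordinatewise $\rho'$-contractive respectively ($0<\rho,\rho'<1$), and let $\mu_n,\nu_n$ ($n\ge k$) be their iterated $\beta$-extensions. Let $\le$ be a closed partial order on $Y$ for which $\nu$ is monotone. If $g:X\to Y$ is continuous and $g\circ\mu\le\nu\circ g_k$ (resp. $g\circ\mu\ge\nu\circ g_k$) pointwise on $X^k$, then for every $n\ge k$, $g\circ\mu_n\le\nu_n\circ g_n$ (resp. $g\circ\mu_n\ge\nu_n\circ g_n$) pointwise on $X^n$.
   Context: A $k$-mean is a map $\mu:X^k\to X$ with $\mu(x,\ldots,x)=x$. Nonexpansive: $d(\mu(\mathbf{x}),\mu(\mathbf{y}))\le\max_j d(x_j,y_j)$; coordinatewise $\rho$-contractive: $d(\mu(\mathbf{x}),\mu(\mathbf{y}))\le\rho\,d(x_j,y_j)$ when $\mathbf{x},\mathbf{y}$ differ only in coordinate $j$. $g_n(x_1,\ldots,x_n)=(g(x_1),\ldots,g(x_n))$. A $k$-mean $\nu$ is monotone if $y_i\le y_i'$ for all $i$ implies $\nu(\mathbf{y})\le\nu(\mathbf{y}')$. A partial order is closed if its graph is closed in $Y\times Y$. Barycentric operator of a $k$-mean: $\beta(\mathbf{x})_j=\mu(x_1,\ldots,\widehat{x_j},\ldots,x_{k+1})$; $\mu_k=\mu$ and $\mu_{n+1}$ is the unique continuous $(n+1)$-mean with $\beta_{\mu_n}^r(\mathbf{x})\to(\mu_{n+1}(\mathbf{x}),\ldots,\mu_{n+1}(\mathbf{x}))$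 for all $\mathbf{x}$; similarly for $\nu_n$. *)

From Stdlib Require Import Reals.
From mathcomp Require Import all_boot.
Set Implicit Arguments. Unset Strict Implicit. Unset Printing Implicit Defensive.
Local Open Scope R_scope.

Definition is_metric (X : Type) (d : X -> X -> R) : Prop :=
  (forall x y, 0 <= d x y) /\ (forall x y, d x y = 0 <-> x = y) /\
  (forall x y, d x y = d y x) /\ (forall x y z, d x z <= d x y + d y z).

Definition cauchy_seq (X : Type) (d : X -> X -> R) (u : nat -> X) : Prop :=
  forall eps, 0 < eps -> exists N, forall m n, (N <= m)%nat -> (N <= n)%nat ->
    d (u m) (u n) < eps.

Definition converges (X : Type) (d : X -> X -> R) (u : nat -> X) (l : X) : Prop :=
  forall eps, 0 < eps -> exists N, forall n, (N <= n)%nat -> d (u n) l < eps.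

Definition complete (X : Type) (d : X -> X -> R) : Prop :=
  forall u, cauchy_seq d u -> exists l, converges d u l.

(* X^n is represented as 'I_n -> X, with the max metric. *)
Definition dmax (X : Type) (d : X -> X -> R) (n : nat) (x y : 'I_n -> X) : R :=
  \big[Rmax/0]_(i < n) d (x i) (y i).

Definition continuous_map (X Y : Type) (dX : X -> X -> R) (dY : Y -> Y -> R)
  (f : X -> Y) : Prop :=
  forall x eps, 0 < eps -> exists delta, 0 < delta /\
    forall y, dX x y < delta -> dY (f x) (f y) < eps.

Definition is_mean (X : Type) (k : nat) (mu : ('I_k -> X) -> X) : Prop :=
  forall x : X, mu (fun _ => x) = x.

Definition nonexpansive (X : Type) (d : X -> X -> R) (k : nat)
  (mu : ('I_k -> X) -> X) : Prop :=
  forall x y, d (mu x) (mu y) <= dmax d x y.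

Definition coord_contractive (X : Type) (d : X -> X -> R) (k : nat) (rho : R)
  (mu : ('I_k -> X) -> X) : Prop :=
  forall (x y : 'I_k -> X) (j : 'I_k), (forall i, i != j -> x i = y i) ->
    d (mu x) (mu y) <= rho * d (x j) (y j).

Definition gn (X Y : Type) (g : X -> Y) (n : nat) (x : 'I_n -> X) : 'I_n -> Y :=
  fun i => g (x i).

(* Barycentric operator of an n-mean: beta(x)_j = m(x_1,..,x_j omitted,..,x_{n+1}). *)
Definition beta (X : Type) (n : nat) (m : ('I_n -> X) -> X)
  (x : 'I_n.+1 -> X) : 'I_n.+1 -> X :=
  fun j => m (fun i : 'I_n => x (lift j i)).

Definition beta_extensions (X : Type) (d : X -> X -> R) (k : nat)
  (mu : ('I_k -> X) -> X) (muf : forall n, ('I_n -> X) -> X) : Prop :=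
  muf k = mu /\
  forall n, (k <= n)%nat ->
    is_mean (muf n.+1) /\
    continuous_map (@dmax X d n.+1) d (muf n.+1) /\
    forall x : 'I_n.+1 -> X,
      converges (@dmax X d n.+1) (fun r => iter r (beta (muf n)) x)
                (fun _ => muf n.+1 x).

Definition partial_order (Y : Type) (le : Y -> Y -> Prop) : Prop :=
  (forall y, le y y) /\ (forall y y', le y y' -> le y' y -> y = y') /\
  (forall y y' y'', le y y' -> le y' y'' -> le y y'').

(* The graph {(y,y') | y <= y'} is closed in Y x Y (product metric = max). *)
Definition closed_order (Y : Type) (d : Y -> Y -> R) (le : Y -> Y -> Prop) : Prop :=
  forall y y', ~ le y y' -> exists eps, 0 < eps /\
    forall z z', d z y < eps -> d z' y' < eps -> ~ le z z'.

Definition monotone_mean (Y : Type) (le : Y -> Y -> Prop) (k : nat)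
  (nu : ('I_k -> Y) -> Y) : Prop :=
  forall y y' : 'I_k -> Y, (forall i, le (y i) (y' i)) -> le (nu y) (nu y').

(* Say that an X-mean [m] is dominated by a Y-mean [m'] when [g x_i <= y_i] for all [i]
   forces [g (m x) <= m' y].  By monotonicity of [nu], the hypothesis makes [mu] dominated by
   [nu].  Domination is inherited by the barycentric operators and all their iterates, and
   it passes to the limits [mu_(n+1)], [nu_(n+1)] because [g] is continuous and the order
   is closed.  Taking [y = g_n x] gives the claim; the reverse inequality is the same
   argument for the converse order. *)

From Stdlib Require Import Reals Classical.
From mathcomp Require Import all_boot.
Local Open Scope R_scope.

Lemma bigRmax_ge {I : eqType} (F : I -> R) {s : seq I} {i : I} :
  i \in s -> F i <= \big[Rmax/0]_(j <- s) F j.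
Proof.
elim: s => [|a s IH] //; rewrite inE big_cons => /orP [/eqP -> | i_s].
- exact: Rmax_l.
- exact: Rle_trans (IH i_s) (Rmax_r _ _).
Qed.

Lemma dmax_ge {T : Type} (d : T -> T -> R) {n : nat} (x y : 'I_n -> T) (i : 'I_n) :
  d (x i) (y i) <= dmax d x y.
Proof.
by apply: (bigRmax_ge (fun j => d (x j) (y j))); apply: mem_index_enum.
Qed.

Lemma converges_coord {T : Type} {d : T -> T -> R} {n : nat}
    {u : nat -> 'I_n -> T} {l : T} (i : 'I_n) :
  converges (@dmax T d n) u (fun _ => l) -> converges d (fun r => u r i) l.
Proof.
move=> u_l eps eps_gt0; have [N HN] := u_l eps eps_gt0.
exists N => r Nr; exact: Rle_lt_trans (dmax_ge d (u r) (fun _ => l) i) (HN r Nr).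
Qed.

Lemma continuous_map_converges {X Y : Type} {dX : X -> X -> R} {dY : Y -> Y -> R}
    {f : X -> Y} {u : nat -> X} {l : X} :
  is_metric dX -> is_metric dY -> continuous_map dX dY f ->
  converges dX u l -> converges dY (fun r => f (u r)) (f l).
Proof.
move=> [_ [_ [dX_sym _]]] [_ [_ [dY_sym _]]] f_cont u_l eps eps_gt0.
have [delta [delta_gt0 Hdelta]] := f_cont l eps eps_gt0.
have [N HN] := u_l delta delta_gt0.
exists N => r Nr; rewrite dY_sym; apply: Hdelta; rewrite dX_sym; exact: HN.
Qed.

Lemma closed_order_limit {Y : Type} {d : Y -> Y -> R} {le : Y -> Y -> Prop}
    {a b : nat -> Y} {A B : Y} :
  closed_order d le -> converges d a A -> converges d b B ->
  (forall r, le (a r) (b r)) -> le A B.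
Proof.
move=> le_closed a_A b_B le_ab; apply: NNPP => not_le_AB.
have [eps [eps_gt0 Heps]] := le_closed _ _ not_le_AB.
have [N1 HN1] := a_A eps eps_gt0; have [N2 HN2] := b_B eps eps_gt0.
apply: (Heps (a (maxn N1 N2)) (b (maxn N1 N2))); last exact: le_ab.
- exact/HN1/leq_maxl.
- exact/HN2/leq_maxr.
Qed.

Definition converse {Y : Type} (le : Y -> Y -> Prop) : Y -> Y -> Prop :=
  fun y y' => le y' y.

Lemma partial_order_converse {Y : Type} {le : Y -> Y -> Prop} :
  partial_order le -> partial_order (converse le).
Proof.
move=> [le_refl [le_anti le_trans]]; split; first exact: le_refl.
split=> [y y' h h' | y y' y'' h h']; first exact: le_anti.
exact: le_trans h' h.
Qed.

Lemma closed_order_converse {Y : Type} {d : Y -> Y -> R} {le : Y -> Y -> Prop} :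
  closed_order d le -> closed_order d (converse le).
Proof.
move=> le_closed y y' not_le; have [eps [eps_gt0 Heps]] := le_closed _ _ not_le.
by exists eps; split=> // z z' zy z'y'; apply: Heps.
Qed.

Lemma monotone_mean_converse {Y : Type} {le : Y -> Y -> Prop} {k : nat}
    {nu : ('I_k -> Y) -> Y} :
  monotone_mean le nu -> monotone_mean (converse le) nu.
Proof. by move=> nu_mono y y' le_y; apply: nu_mono. Qed.

Definition dominated {X Y : Type} (le : Y -> Y -> Prop) (g : X -> Y) {n : nat}
    (m : ('I_n -> X) -> X) (m' : ('I_n -> Y) -> Y) : Prop :=
  forall x y, (forall i, le (g (x i)) (y i)) -> le (g (m x)) (m' y).

Section Domination.

Context {X Y : Type} {dX : X -> X -> R} {dY : Y -> Y -> R}.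
Context {le : Y -> Y -> Prop} {g : X -> Y}.

Lemma dominated_iter_beta {n : nat} {m : ('I_n -> X) -> X} {m' : ('I_n -> Y) -> Y}
    {x : 'I_n.+1 -> X} {y : 'I_n.+1 -> Y} :
  dominated le g m m' -> (forall i, le (g (x i)) (y i)) ->
  forall r i, le (g (iter r (beta m) x i)) (iter r (beta m') y i).
Proof.
move=> m_m' le_xy; elim=> [|r IH] i //=.
by apply: m_m' => j; apply: IH.
Qed.

Hypotheses (dX_metric : is_metric dX) (dY_metric : is_metric dY).
Hypotheses (le_closed : closed_order dY le) (g_cont : continuous_map dX dY g).

Lemma dominated_beta_limit {n : nat}
    {m : ('I_n -> X) -> X} {m' : ('I_n -> Y) -> Y}
    {M : ('I_n.+1 -> X) -> X} {M' : ('I_n.+1 -> Y) -> Y} :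
  (forall x, converges (@dmax X dX n.+1) (fun r => iter r (beta m) x) (fun _ => M x)) ->
  (forall y, converges (@dmax Y dY n.+1) (fun r => iter r (beta m') y) (fun _ => M' y)) ->
  dominated le g m m' -> dominated le g M M'.
Proof.
move=> m_M m'_M' m_m' x y le_xy.
have gx_gM := continuous_map_converges dX_metric dY_metric g_cont
                 (converges_coord ord0 (m_M x)).
apply: (closed_order_limit le_closed gx_gM (converges_coord ord0 (m'_M' y))).
by move=> r; apply: dominated_iter_beta.
Qed.

Lemma dominated_beta_extensions {k : nat}
    {mu : ('I_k -> X) -> X} {nu : ('I_k -> Y) -> Y}
    {muf : forall n, ('I_n -> X) -> X} {nuf : forall n, ('I_n -> Y) -> Y} :
  beta_extensions dX mu muf -> beta_extensions dY nu nuf ->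
  dominated le g mu nu -> forall n, (k <= n)%nat -> dominated le g (muf n) (nuf n).
Proof.
move=> [muf_k muf_ext] [nuf_k nuf_ext] mu_nu.
elim=> [|n IH]; first by rewrite leqn0 => /eqP k0; subst k; rewrite muf_k nuf_k.
rewrite leq_eqVlt ltnS => /orP [/eqP kn | kn].
- by subst k; rewrite muf_k nuf_k.
- have [_ [_ muf_lim]] := muf_ext n kn; have [_ [_ nuf_lim]] := nuf_ext n kn.
  exact: dominated_beta_limit muf_lim nuf_lim (IH kn).
Qed.

End Domination.

Lemma dominated_of_monotone {X Y : Type} {le : Y -> Y -> Prop} {g : X -> Y} {k : nat}
    {mu : ('I_k -> X) -> X} {nu : ('I_k -> Y) -> Y} :
  partial_order le -> monotone_mean le nu ->
  (forall x, le (g (mu x)) (nu (gn g x))) -> dominated le g mu nu.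
Proof.
move=> [_ [_ le_trans]] nu_mono le_mu_nu x y le_xy.
exact: le_trans (le_mu_nu x) (nu_mono _ _ le_xy).
Qed.

Lemma dominated_gn {X Y : Type} {le : Y -> Y -> Prop} {g : X -> Y} {n : nat}
    {m : ('I_n -> X) -> X} {m' : ('I_n -> Y) -> Y} :
  partial_order le -> dominated le g m m' -> forall x, le (g (m x)) (m' (gn g x)).
Proof. by move=> [le_refl _] m_m' x; apply: m_m' => i; apply: le_refl. Qed.

Lemma le_beta_extensions {X Y : Type} {dX : X -> X -> R} {dY : Y -> Y -> R} {k : nat}
    {mu : ('I_k -> X) -> X} {nu : ('I_k -> Y) -> Y}
    {muf : forall n, ('I_n -> X) -> X} {nuf : forall n, ('I_n -> Y) -> Y}
    {le : Y -> Y -> Prop} {g : X -> Y} :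
  is_metric dX -> is_metric dY ->
  beta_extensions dX mu muf -> beta_extensions dY nu nuf ->
  partial_order le -> closed_order dY le -> monotone_mean le nu ->
  continuous_map dX dY g ->
  (forall x, le (g (mu x)) (nu (gn g x))) ->
  forall n, (k <= n)%nat -> forall x, le (g (muf n x)) (nuf n (gn g x)).
Proof.
move=> mX mY muf_ext nuf_ext le_po le_closed nu_mono g_cont le_mu_nu n kn.
apply: (dominated_gn le_po).
apply: (dominated_beta_extensions mX mY le_closed g_cont muf_ext nuf_ext) kn.
exact: dominated_of_monotone le_po nu_mono le_mu_nu.
Qed.

Theorem theorem9p3
  (X Y : Type) (dX : X -> X -> R) (dY : Y -> Y -> R)
  (k : nat) (rho rho' : R)
  (mu : ('I_k -> X) -> X) (nu : ('I_k -> Y) -> Y)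
  (muf : forall n, ('I_n -> X) -> X) (nuf : forall n, ('I_n -> Y) -> Y)
  (le : Y -> Y -> Prop) (g : X -> Y) :
  is_metric dX -> complete dX -> is_metric dY -> complete dY ->
  (2 <= k)%nat ->
  is_mean mu -> nonexpansive dX mu -> 0 < rho < 1 -> coord_contractive dX rho mu ->
  is_mean nu -> nonexpansive dY nu -> 0 < rho' < 1 -> coord_contractive dY rho' nu ->
  beta_extensions dX mu muf -> beta_extensions dY nu nuf ->
  partial_order le -> closed_order dY le -> monotone_mean le nu ->
  continuous_map dX dY g ->
  ((forall x : 'I_k -> X, le (g (mu x)) (nu (gn g x))) ->
     forall n, (k <= n)%nat -> forall x : 'I_n -> X, le (g (muf n x)) (nuf n (gn g x)))
  /\
  ((forall x : 'I_k -> X, le (nu (gn g x)) (g (mu x))) ->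
     forall n, (k <= n)%nat -> forall x : 'I_n -> X, le (nuf n (gn g x)) (g (muf n x))).
Proof.
(* Completeness and the contraction bounds only serve to make the extensions exist,
   which [beta_extensions] already provides. *)
move=> mX _ mY _ _ _ _ _ _ _ _ _ _ muf_ext nuf_ext le_po le_closed nu_mono g_cont.
have transfer := le_beta_extensions mX mY muf_ext nuf_ext.
split; first exact: transfer le_po le_closed nu_mono g_cont.
exact: transfer (partial_order_converse le_po) (closed_order_converse le_closed)
         (monotone_mean_converse nu_mono) g_cont.
Qed.
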